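(* Let $G=(V,E,w)$ be a weighted undirected connected graph with $n$ vertices and $m$ edges, and let $\Pi_G=U\Sigma V^T$ be a thin SVD of its edge-vertex incidence matrix with $U\in\mathbb{R}^{n\times(n-1)}$, $\Sigma\in\mathbb{R}^{(n-1)\times(n-1)}$, $V\in\mathbb{R}^{m\times(n-1)}$, and let $Y=V^T$. Then: (1) if $T$ is a spanning tree of $G$, then $\mathrm{St}_T(G)=\|Y_{\mathcal S(T)}^{-1}\|_F^2$; (2) if $\mathcal S\subseteq[m]$ has cardinality $n-1$ and $Y_{\mathcal S}$ has full rank, then $H(\mathcal S)$ is a spanning tree of $G$.
   Context: Let $V=\{1,\dots,n\}$, $E=\{(u_1,v_1),\dots,(u_m,v_m)\}$, with positive weights $w$. The edge-vertex incidence matrix $\Pi_G\in\mathbb{R}^{n\times m}$ has $i$-th column $\sqrt{w(u_i,v_i)}(e_{u_i}-e_{v_i})$, where $e_j$ are standard basis vectors; since $G$ is connected, $\mathrm{rank}(\Pi_G)=n-1$. For a set of edges (e.g. of a spanning tree $T$), $\mathcal S(T)\subseteq[m]$ is the set of indices of its edges; for $\mathcal S\subseteq[m]$, $H(\mathcal S)$ is the subgraph of $G$ on vertex set $V$ with the edges indexed by $\mathcal S$. $Y_{\mathcal S}$ is the submatrix of columns of $Y$ indexed by $\mathcal S$. For a spanning tree $T$ and edge $e\in E$, let $p_T(e)$ be the set of edges on the unique path in $T$ between the endpoints of $e$; the stretch of $e$ is $\mathrm{St}_T(e)=\sum_{e'\in p_T(e)}w(e)/w(e')$, and $\mathrm{St}_T(G)=\sum_{e\in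 E}\mathrm{St}_T(e)$. $\|\cdot\|_F$ is the Frobenius norm. *)

From HB Require Import structures.
From mathcomp Require Import all_boot all_order all_algebra.
From mathcomp Require Import boolp reals.
Set Implicit Arguments. Unset Strict Implicit. Unset Printing Implicit Defensive.
Import Order.TTheory GRing.Theory Num.Theory.
Local Open Scope ring_scope.

Definition joins (N m : nat) (ends : 'I_m -> 'I_N * 'I_N)
  (e : 'I_m) (x y : 'I_N) : bool :=
  (ends e == (x, y)) || (ends e == (y, x)).

Definition adj (N m : nat) (ends : 'I_m -> 'I_N * 'I_N)
  (S : {set 'I_m}) : rel 'I_N :=
  fun x y => [exists e in S, joins ends e x y].

Definition sconnected (N m : nat) (ends : 'I_m -> 'I_N * 'I_N)
  (S : {set 'I_m}) : Prop :=
  forall x y : 'I_N, connect (adj ends S) x y.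

Definition is_cycle (N m : nat) (ends : 'I_m -> 'I_N * 'I_N)
  (S : {set 'I_m}) (k : nat) (es : nat -> 'I_m) (xs : nat -> 'I_N) : Prop :=
  [/\ (0 < k)%N,
      (forall i j, (i < k)%N -> (j < k)%N -> es i = es j -> i = j),
      (forall i j, (i < k)%N -> (j < k)%N -> xs i = xs j -> i = j) &
      forall i, (i < k)%N -> es i \in S /\ joins ends (es i) (xs i) (xs (i.+1 %% k)%N)].

Definition acyclic (N m : nat) (ends : 'I_m -> 'I_N * 'I_N)
  (S : {set 'I_m}) : Prop :=
  forall k es xs, ~ is_cycle ends S k es xs.

Definition spanning_tree (N m : nat) (ends : 'I_m -> 'I_N * 'I_N)
  (S : {set 'I_m}) : Prop :=
  sconnected ends S /\ acyclic ends S.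

Definition is_spath (N m : nat) (ends : 'I_m -> 'I_N * 'I_N)
  (S : {set 'I_m}) (u v : 'I_N) (k : nat) (es : nat -> 'I_m) (xs : nat -> 'I_N)
  : Prop :=
  [/\ xs 0%N = u, xs k = v,
      (forall i j, (i <= k)%N -> (j <= k)%N -> xs i = xs j -> i = j) &
      forall i, (i < k)%N -> es i \in S /\ joins ends (es i) (xs i) (xs i.+1)].

Definition is_path_edges (N m : nat) (ends : 'I_m -> 'I_N * 'I_N)
  (S : {set 'I_m}) (u v : 'I_N) (P : {set 'I_m}) : Prop :=
  exists k es xs, is_spath ends S u v k es xs /\
                  P = [set es (nat_of_ord i) | i : 'I_k].

(* p_T(e): the edge set of the (unique, when T is a spanning tree) path in T
   between the endpoints of e (set0 if no such path exists) *)
Definition path_edges (N m : nat) (ends : 'I_m -> 'I_N * 'I_N)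
  (T : {set 'I_m}) (e : 'I_m) : {set 'I_m} :=
  odflt set0 [pick P : {set 'I_m} |
                `[< is_path_edges ends T (ends e).1 (ends e).2 P >]].

Definition stretch_edge (R : realType) (N m : nat) (ends : 'I_m -> 'I_N * 'I_N)
  (w : 'I_m -> R) (T : {set 'I_m}) (e : 'I_m) : R :=
  \sum_(e' in path_edges ends T e) w e / w e'.

Definition stretch (R : realType) (N m : nat) (ends : 'I_m -> 'I_N * 'I_N)
  (w : 'I_m -> R) (T : {set 'I_m}) : R :=
  \sum_(e : 'I_m) stretch_edge ends w T e.

Definition incidence (R : realType) (N m : nat) (ends : 'I_m -> 'I_N * 'I_N)
  (w : 'I_m -> R) : 'M[R]_(N, m) :=
  \matrix_(x, i) (Num.sqrt (w i) *
                  ((x == (ends i).1)%:R - (x == (ends i).2)%:R)).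

Definition frob2 (R : realType) (p q : nat) (A : 'M[R]_(p, q)) : R :=
  \sum_(i < p) \sum_(j < q) A i j ^+ 2.

From mathcomp Require Import all_boot all_order all_algebra.
From mathcomp Require Import boolp reals.
From mathcomp Require Import zify.
Set Implicit Arguments. Unset Strict Implicit. Unset Printing Implicit Defensive.
Import Order.TTheory GRing.Theory Num.Theory.
Local Open Scope ring_scope.

(* Write B for the incidence matrix and B_S, Y_S for the selections of columns
   indexed by S.  Since B = (U Sig) Y and U Sig has the left inverse Sig^-1 U^T
   (Sig is invertible because G is connected, so B has rank n), B_S and Y_S have
   the same rank.  The left kernel of B_S consists of the vertex potentials that
   are constant along the edges of S, and a cycle in S gives a signed combination
   of columns of B_S summing to zero; so rank B_S = n = |S| forces H(S) to be
   connected and acyclic.  For a spanning tree T, every column e of B equals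
   B_T g_e, where g_e carries +-sqrt(w e / w e') on the edges e' of the tree path
   p_T(e); hence B = B_T Gam with ||Gam||_F^2 = St_T(G), and Y = Y_T Gam gives
   Gam = Y_T^-1 Y, whose Frobenius norm is that of Y_T^-1 because Y Y^T = 1. *)

Section Graphs.
Variables (N m : nat) (ends : 'I_m -> 'I_N * 'I_N).

Lemma adj_sym (S : {set 'I_m}) : symmetric (adj ends S).
Proof.
by move=> x y; apply/existsP/existsP => -[e]; exists e; rewrite /joins orbC.
Qed.

Lemma adj_ends (S : {set 'I_m}) e : e \in S -> adj ends S (ends e).1 (ends e).2.
Proof.
by move=> eS; apply/existsP; exists e; rewrite eS /joins -surjective_pairing eqxx.
Qed.

Lemma spath_edges_inj S u v k es xs :
  is_spath ends S u v k es xs ->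
  forall i j, (i < k)%N -> (j < k)%N -> es i = es j -> i = j.
Proof.
case=> _ _ xs_inj es_edge i j ik jk eij.
have xs_eq a b : (a <= k)%N -> (b <= k)%N -> xs a = xs b -> a = b by apply: xs_inj.
have [_] := es_edge i ik; have [_] := es_edge j jk; rewrite /joins eij.
case/orP => /eqP -> /orP [] /eqP [E1 E2].
- by have := xs_eq _ _ (ltnW jk) (ltnW ik) E1; lia.
- by have := xs_eq _ _ (ltnW jk) ik E1; have := xs_eq _ _ jk (ltnW ik) E2; lia.
- by have := xs_eq _ _ jk (ltnW ik) E1; have := xs_eq _ _ (ltnW jk) ik E2; lia.
- by have := xs_eq _ _ (ltnW jk) (ltnW ik) E2; lia.
Qed.

(* [e0] only serves as a default value for edge names past the end of the path. *)
Lemma connect_path_edges (S : {set 'I_m}) (e0 : 'I_m) u v :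
  connect (adj ends S) u v -> exists P, is_path_edges ends S u v P.
Proof.
move/connectP => [p uv_path ->]; case: (shortenP uv_path) => p' uv_path' p'_uniq _.
pose xs i := nth u (u :: p') i.
pose es i := odflt e0 [pick e in S | joins ends e (xs i) (xs i.+1)].
exists [set es (nat_of_ord i) | i : 'I_(size p')], (size p'), es, xs; split => //.
split => //.
- by rewrite /xs (last_nth u).
- by move=> i j ik jk /eqP; rewrite /xs nth_uniq /= ?ltnS // => /eqP.
- move=> i ik; move/pathP: uv_path' => /(_ u i ik) /existsP [e /andP [eS je]].
  rewrite /es; case: pickP => [e' /andP [eS' je'] | no_edge] //=.
  by move: (no_edge e); rewrite eS je.
Qed.

Lemma path_edgesP (S : {set 'I_m}) e :
  sconnected ends S ->
  exists k es xs, is_spath ends S (ends e).1 (ends e).2 k es xs /\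
                  path_edges ends S e = [set es (nat_of_ord i) | i : 'I_k].
Proof.
move=> S_conn; rewrite /path_edges.
case: pickP => [P /asboolP [k [es [xs [sp ->]]]] | no_path] /=.
  by exists k, es, xs.
have [P HP] := connect_path_edges e (S_conn (ends e).1 (ends e).2).
by move: (no_path P); rewrite (asboolT HP).
Qed.

Lemma path_edges_sub (S : {set 'I_m}) e : path_edges ends S e \subset S.
Proof.
rewrite /path_edges; case: pickP => [P /asboolP [k [es [xs [[_ _ _ es_edge] ->]]]] | _] /=.
  by apply/subsetP => x /imsetP [i _ ->]; case: (es_edge i (ltn_ord i)).
exact: sub0set.
Qed.

End Graphs.

Lemma sum_in_subset_imset (V : nmodType) (I T : finType) (f : I -> T) (F : T -> V)
    (P : {set T}) :
  injective f -> P \subset [set f i | i : I] ->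
  \sum_(t in P) F t = \sum_(i | f i \in P) F (f i).
Proof.
move=> f_inj /subsetP Pf.
transitivity (\sum_(t in f @: [set i | f i \in P]) F t).
  apply: eq_bigl => t; apply/idP/imsetP => [tP | [i]]; last by rewrite inE => iP ->.
  by have /imsetP [i _ ti] := Pf t tP; exists i; rewrite // inE -ti.
rewrite big_imset; last by move=> ? ? _ _ /f_inj.
by apply: eq_bigl => i; rewrite inE.
Qed.

Lemma frob2_tr (R : realType) p q (M : 'M[R]_(p, q)) : frob2 M = \tr (M *m M^T).
Proof.
rewrite /frob2 /mxtrace; apply: eq_bigr => i _; rewrite mxE.
by apply: eq_bigr => j _; rewrite mxE expr2.
Qed.

Lemma frob2_mulmx_orthonormal_rows (R : realType) p q r (M : 'M[R]_(p, q)) (Y : 'M[R]_(q, r)) :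
  Y *m Y^T = 1%:M -> frob2 (M *m Y) = frob2 M.
Proof.
by move=> YYt; rewrite !frob2_tr trmx_mul mulmxA -(mulmxA M) YYt mulmx1.
Qed.

Lemma mxrank_mulmx_linv (F : fieldType) p q r (L : 'M[F]_(q, p)) (A : 'M[F]_(p, q))
    (X : 'M[F]_(q, r)) :
  L *m A = 1%:M -> \rank (A *m X) = \rank X.
Proof.
move=> LA; apply/eqP; rewrite eqn_leq mxrankM_maxr /=.
by rewrite -{1}[X]mul1mx -LA -mulmxA mxrankM_maxr.
Qed.

Lemma unitmx_of_rank_mulmx (F : fieldType) p q r (P : 'M[F]_(p, r)) (S : 'M[F]_r)
    (Q : 'M[F]_(r, q)) :
  (r <= \rank (P *m S *m Q))%N -> S \in unitmx.
Proof.
move=> rk; rewrite -row_free_unit /row_free eqn_leq rank_leq_row (leq_trans rk) //.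
exact: leq_trans (mxrankM_maxl _ _) (mxrankM_maxr _ _).
Qed.

Section Incidence.
Variables (R : realType) (n m : nat) (ends : 'I_m -> 'I_n.+1 * 'I_n.+1) (w : 'I_m -> R).
Hypothesis w_gt0 : forall e, 0 < w e.

Local Notation B := (incidence ends w).

Lemma incidence_col e :
  col e B = Num.sqrt (w e) *: (delta_mx (ends e).1 0 - delta_mx (ends e).2 0).
Proof. by apply/colP => a; rewrite !mxE !eqxx !andbT. Qed.

Lemma mul_row_colsub_incidence p (g : 'I_p -> 'I_m) (x : 'rV[R]_n.+1) j :
  (x *m colsub g B) 0 j =
  Num.sqrt (w (g j)) * (x 0 (ends (g j)).1 - x 0 (ends (g j)).2).
Proof.
rewrite !mxE; under eq_bigr => a _ do rewrite !mxE mulrCA.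
rewrite -mulr_sumr; congr (_ * _).
under eq_bigr => a _ do rewrite mulrBr !mulr_natr !mulrb.
by rewrite sumrB -!big_mkcond !big_pred1_eq.
Qed.

Lemma incidence_lker p (g : 'I_p -> 'I_m) (x : 'rV[R]_n.+1) :
  (x *m colsub g B == 0) = [forall j, x 0 (ends (g j)).1 == x 0 (ends (g j)).2].
Proof.
apply/eqP/forallP => [/matrixP x_ker j | x_edge].
  move: (x_ker 0 j); rewrite mul_row_colsub_incidence mxE => /eqP.
  by rewrite mulf_eq0 sqrtr_eq0 leNgt w_gt0 subr_eq0.
apply/matrixP => i j; rewrite ord1 mul_row_colsub_incidence (eqP (x_edge j)).
by rewrite subrr mulr0 mxE.
Qed.

Lemma incidence_lker_connect p (g : 'I_p -> 'I_m) (S : {set 'I_m}) (x : 'rV[R]_n.+1) u v :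
  S \subset [set g j | j : 'I_p] -> x *m colsub g B = 0 ->
  connect (adj ends S) u v -> x 0 u = x 0 v.
Proof.
move=> /subsetP Sg /eqP; rewrite incidence_lker => /forallP x_edge uv.
have x_closed : closed (adj ends S) [pred y | x 0 y == x 0 u].
  move=> y z /existsP [_ /andP [/Sg/imsetP [j _ ->] /orP [] /eqP ends_j]];
    by have := eqP (x_edge j); rewrite ends_j !inE /= => ->.
by have := closed_connect x_closed uv; rewrite !inE eqxx => /esym/eqP.
Qed.

Lemma incidence_rank_connected p (g : 'I_p -> 'I_m) (S : {set 'I_m}) :
  S \subset [set g j | j : 'I_p] -> sconnected ends S -> (n <= \rank (colsub g B))%N.
Proof.
move=> Sg S_conn.
have ker_const : (kermx (colsub g B) <= (const_mx 1 : 'rV[R]_n.+1))%MS.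
  apply/row_subP => i; set x := row i _.
  have x_ker : x *m colsub g B = 0 by rewrite -row_mul mulmx_ker row0.
  clearbody x; apply/sub_rVP; exists (x 0 0); apply/rowP => a.
  by rewrite !mxE mulr1; apply: incidence_lker_connect Sg x_ker (S_conn a 0).
have := mxrankS ker_const; rewrite mxrank_ker.
have := rank_leq_row (const_mx 1 : 'rV[R]_n.+1); lia.
Qed.

(* If H(S) were disconnected, the indicator of a component would be a second,
   independent vector in the one-dimensional left kernel. *)
Lemma incidence_full_rank_connected p (g : 'I_p -> 'I_m) :
  \rank (colsub g B) = n -> sconnected ends [set g j | j : 'I_p].
Proof.
move=> rk u v; set S := [set g j | j : 'I_p]; apply/idPn => not_uv.
pose ones := const_mx 1 : 'rV[R]_n.+1.
pose chi := \row_a (connect (adj ends S) u a)%:R : 'rV[R]_n.+1.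
have ones_ker : (ones <= kermx (colsub g B))%MS.
  by apply/sub_kermxP/eqP; rewrite incidence_lker; apply/forallP => j; rewrite !mxE.
have chi_ker : (chi <= kermx (colsub g B))%MS.
  apply/sub_kermxP/eqP; rewrite incidence_lker; apply/forallP => j; rewrite !mxE.
  have gjS : g j \in S by apply/imsetP; exists j.
  have adj_j := adj_ends ends gjS.
  by have := connect_closed (sym_connect_sym (adj_sym ends S)) u adj_j; rewrite !inE => ->.
have ker_ones : (kermx (colsub g B) <= ones)%MS.
  have rk_ones : \rank ones = 1%N.
    rewrite rank_rV; case: eqP => // /matrixP /(_ 0 0) /eqP.
    by rewrite !mxE oner_eq0.
  have := (mxrank_leqif_eq ones_ker).2.
  by rewrite rk_ones mxrank_ker rk subSnn eqxx => /esym/andP [].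
have /sub_rVP [c chi_c] := submx_trans chi_ker ker_ones.
have := congr1 (fun M : 'rV[R]_n.+1 => M 0 u) chi_c.
have := congr1 (fun M : 'rV[R]_n.+1 => M 0 v) chi_c.
by rewrite /= !mxE connect0 (negbTE not_uv) mulr1 => <- /eqP; rewrite eqr_nat.
Qed.

(* [h] puts [±1/sqrt(w e)] on every trail edge [e], the sign orienting [e] along the trail. *)
Lemma incidence_trail_vec p (f : 'I_p -> 'I_m) (f_inj : injective f) k
    (es : nat -> 'I_m) (xs ys : nat -> 'I_n.+1) :
  (forall i j, (i < k)%N -> (j < k)%N -> es i = es j -> i = j) ->
  (forall i, (i < k)%N ->
     es i \in [set f j | j : 'I_p] /\ joins ends (es i) (xs i) (ys i)) ->
  exists h : 'cV[R]_p,
    colsub f B *m h = \sum_(i < k) (delta_mx (xs i) 0 - delta_mx (ys i) 0) /\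
    forall j, h j 0 ^+ 2 = (f j \in [set es (nat_of_ord i) | i : 'I_k])%:R / w (f j).
Proof.
move=> es_inj es_edge.
pose s i : R := if ends (es i) == (xs i, ys i) then 1 else -1.
exists (\col_j \sum_(i < k | es i == f j) s i / Num.sqrt (w (f j))); split.
  apply/colP => a; rewrite !mxE summxE.
  under eq_bigr => j _ do rewrite !mxE big_distrr /= big_mkcond /=.
  rewrite exchange_big /=; apply: eq_bigr => i _.
  have [/imsetP [j0 _ fj0] ends_i] := es_edge i (ltn_ord i).
  rewrite -big_mkcond (big_pred1 j0) /=; last first.
    by move=> j; rewrite /= fj0 (inj_eq f_inj) eq_sym.
  have sqrt_neq0 : Num.sqrt (w (es i)) != 0 by rewrite sqrtr_eq0 -ltNge w_gt0.
  rewrite -fj0 -mulrA mulrCA [Num.sqrt _ * _]mulrCA mulfV // mulr1 !mxE !eqxx !andbT.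
  rewrite /s; case/orP: ends_i => /eqP ->; first by rewrite eqxx mulr1.
  by case: ifP => [/eqP [-> _]|_]; rewrite /= ?mulr1 // mulrN1 opprB.
move=> j; rewrite mxE.
have [/imsetP [i0 _ fj] | fj_notin] := boolP (f j \in [set es (nat_of_ord i) | i : 'I_k]).
  rewrite (big_pred1 i0) /=; last first.
    move=> i; rewrite /= fj; apply/eqP/eqP => [E|-> //].
    exact/val_inj/(es_inj _ _ (ltn_ord i) (ltn_ord i0) E).
  by rewrite expr_div_n sqr_sqrtr ?ltW // /s; case: ifP; rewrite ?sqrrN expr1n mul1r.
rewrite big1 ?expr0n ?mul0r // => i /eqP E.
by case/negP: fj_notin; apply/imsetP; exists i.
Qed.

Lemma incidence_spath_vec p (f : 'I_p -> 'I_m) (f_inj : injective f) u v k es xs :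
  is_spath ends [set f j | j : 'I_p] u v k es xs ->
  exists h : 'cV[R]_p,
    colsub f B *m h = delta_mx u 0 - delta_mx v 0 /\
    forall j, h j 0 ^+ 2 = (f j \in [set es (nat_of_ord i) | i : 'I_k])%:R / w (f j).
Proof.
move=> sp; have [xs0 xsk _ es_edge] := sp.
have [h [Bh h2]] := incidence_trail_vec f_inj (spath_edges_inj sp) es_edge.
exists h; split => //; rewrite Bh.
rewrite -(big_mkord xpredT (fun i => delta_mx (xs i) 0 - delta_mx (xs i.+1) 0)).
under eq_bigr do rewrite -opprB.
by rewrite sumrN telescope_sumr // opprB xs0 xsk.
Qed.

Lemma incidence_cycle_vec p (f : 'I_p -> 'I_m) (f_inj : injective f) k es xs :
  is_cycle ends [set f j | j : 'I_p] k es xs ->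
  exists2 h : 'cV[R]_p, h != 0 & colsub f B *m h = 0.
Proof.
case=> k_gt0 es_inj _ es_edge.
have [h [Bh h2]] := incidence_trail_vec f_inj es_inj es_edge.
exists h.
  have [/imsetP [j0 _ fj0] _] := es_edge 0%N k_gt0.
  apply/eqP => h0; move: (h2 j0); rewrite h0 mxE expr0n -fj0.
  have -> : es 0%N \in [set es (nat_of_ord i) | i : 'I_k].
    by apply/imsetP; exists (Ordinal k_gt0).
  rewrite mul1r => /esym/eqP.
  by rewrite invr_eq0 gt_eqF ?w_gt0.
by rewrite Bh sumrB [X in X - _](reindex_inj (@ordS_inj k)) subrr.
Qed.

Lemma incidence_full_rank_acyclic p (f : 'I_p -> 'I_m) (f_inj : injective f) :
  \rank (colsub f B) = p -> acyclic ends [set f j | j : 'I_p].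
Proof.
move=> rk k es xs /(incidence_cycle_vec f_inj) [h h_neq0 Bh].
have : (h^T <= kermx (colsub f B)^T)%MS by apply/sub_kermxP; rewrite -trmx_mul Bh trmx0.
move/mxrankS; rewrite mxrank_ker !mxrank_tr rk subnn leqn0 mxrank_eq0.
by rewrite (negbTE h_neq0).
Qed.

Lemma incidence_edge_vec p (f : 'I_p -> 'I_m) (f_inj : injective f) e :
  sconnected ends [set f j | j : 'I_p] ->
  exists g : 'cV[R]_p,
    colsub f B *m g = col e B /\
    forall j, g j 0 ^+ 2 =
      (f j \in path_edges ends [set f j | j : 'I_p] e)%:R * (w e / w (f j)).
Proof.
move=> f_conn; have [k [es [xs [sp ->]]]] := path_edgesP e f_conn.
have [h [Bh h2]] := incidence_spath_vec f_inj sp.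
exists (Num.sqrt (w e) *: h); split; first by rewrite -scalemxAr Bh incidence_col.
by move=> j; rewrite mxE exprMn sqr_sqrtr ?ltW // h2 mulrCA.
Qed.

Lemma incidence_connected_factor p (f : 'I_p -> 'I_m) (f_inj : injective f) :
  sconnected ends [set f j | j : 'I_p] ->
  exists G : 'M[R]_(p, m),
    colsub f B *m G = B /\ frob2 G = stretch ends w [set f j | j : 'I_p].
Proof.
move=> f_conn; have [g g_spec] := choice (fun e => incidence_edge_vec f_inj e f_conn).
exists (\matrix_(j, e) g e j 0); split.
  apply/matrixP => a e; have := congr1 (fun M : 'cV[R]_n.+1 => M a 0) (g_spec e).1.
  by rewrite !mxE => <-; apply: eq_big => // j _; rewrite !mxE.
rewrite /frob2 /stretch exchange_big; apply: eq_bigr => e _.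
rewrite /stretch_edge (sum_in_subset_imset _ f_inj (path_edges_sub _ _ _)) [RHS]big_mkcond.
apply: eq_bigr => j _; rewrite mxE (g_spec e).2.
by case: (_ \in _); rewrite ?mul1r ?mul0r.
Qed.

End Incidence.

Theorem theorem5p1 (R : realType) (n m : nat)
  (ends : 'I_m -> 'I_n.+1 * 'I_n.+1) (w : 'I_m -> R)
  (Hw : forall i, 0 < w i)
  (Hloop : forall i, (ends i).1 != (ends i).2)
  (Hconn : sconnected ends [set: 'I_m])
  (U : 'M[R]_(n.+1, n)) (Sig : 'M[R]_n) (V : 'M[R]_(m, n))
  (HU : U^T *m U = 1%:M) (HV : V^T *m V = 1%:M)
  (HSig : is_diag_mx Sig) (HSig0 : forall i, 0 <= Sig i i)
  (Hsvd : incidence ends w = U *m Sig *m V^T) :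
  let Y := V^T in
  (forall (T : {set 'I_m}), spanning_tree ends T ->
     forall f : 'I_n -> 'I_m, injective f -> [set f i | i : 'I_n] = T ->
       colsub f Y \in unitmx /\
       stretch ends w T = frob2 (invmx (colsub f Y)))
  /\
  (forall f : 'I_n -> 'I_m, injective f -> \rank (colsub f Y) = n ->
     spanning_tree ends [set f i | i : 'I_n]).
Proof.
move=> Y; set A := U *m Sig.
have B_AY p (f : 'I_p -> 'I_m) : colsub f (incidence ends w) = A *m colsub f Y.
  by rewrite mulmx_colsub -Hsvd.
have Sig_unit : Sig \in unitmx.
  have Gid : [set: 'I_m] \subset [set id e | e : 'I_m].
    by apply/subsetP => e _; apply/imsetP; exists e.
  have := incidence_rank_connected Hw Gid Hconn.
  by rewrite B_AY; apply: unitmx_of_rank_mulmx.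
have LA : invmx Sig *m U^T *m A = 1%:M.
  by rewrite /A mulmxA -(mulmxA _ U^T) HU mulmx1 mulVmx.
have rank_Y p (f : 'I_p -> 'I_m) : \rank (colsub f Y) = \rank (colsub f (incidence ends w)).
  by rewrite B_AY (mxrank_mulmx_linv _ LA).
split=> [T [T_conn _] f f_inj fT | f f_inj rk].
  rewrite -fT in T_conn *.
  have Yf_unit : colsub f Y \in unitmx.
    rewrite -row_free_unit /row_free rank_Y eqn_leq rank_leq_col /=.
    exact: (incidence_rank_connected Hw (subxx _) T_conn).
  split=> //; have [G [BG <-]] := incidence_connected_factor Hw f_inj T_conn.
  have YfG : colsub f Y *m G = Y.
    have := congr1 (mulmx (invmx Sig *m U^T)) BG.
    by rewrite B_AY Hsvd !mulmxA -(mulmxA _ U Sig) LA !mul1mx.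
  by rewrite -[G](mulKmx Yf_unit) YfG frob2_mulmx_orthonormal_rows // trmxK HV.
rewrite rank_Y in rk.
exact: (conj (incidence_full_rank_connected Hw rk)
             (incidence_full_rank_acyclic Hw f_inj rk)).
Qed.
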